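(* Let $k$ be a field of prime characteristic $p$ and let $H_1=\{x_1^p\}^S$ be the $T$-space of $k_0\langle X\rangle$ generated by $x_1^p$. Then for any $u\in H_1$ and any $v\in k_0\langle X\rangle$, $[u,v]=uv-vu\in H_1$.
   Context: $X=\{x_1,x_2,\ldots\}$ is countably infinite; $k_0\langle X\rangle$ is the free associative (non-unital) $k$-algebra on $X$. A $T$-space is a $k$-subspace of $k_0\langle X\rangle$ invariant under every algebra endomorphism of $k_0\langle X\rangle$; $\{f\}^S$ is the $T$-space generated by $f$. *)

From HB Require Import structures.
From mathcomp Require Import all_boot all_order all_algebra.
Set Implicit Arguments. Unset Strict Implicit. Unset Printing Implicit Defensive.
Import GRing.Theory.
Local Open Scope ring_scope.

(* The free non-unital associative algebra k_0<X> on X = {x_1, x_2, ...}.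
   Variable x_(i+1) is encoded by the natural number i; monomials are words
   (seq nat); an element is a finitely supported function words -> k that
   vanishes on the empty word (no constant term: non-unital). *)
Definition ncpoly (k : fieldType) := seq nat -> k.

Section NC.
Variable k : fieldType.

Definition is_ncp (f : ncpoly k) : Prop :=
  f [::] = 0 /\ exists s : seq (seq nat), forall w, f w != 0 -> w \in s.

Definition nc_zero : ncpoly k := fun _ => 0.
Definition nc_add (f g : ncpoly k) : ncpoly k := fun w => f w + g w.
Definition nc_scale (c : k) (f : ncpoly k) : ncpoly k := fun w => c * f w.
Definition nc_sub (f g : ncpoly k) : ncpoly k := fun w => f w - g w.
Definition nc_mul (f g : ncpoly k) : ncpoly k :=
  fun w => \sum_(i < (size w).+1) f (take i w) * g (drop i w).
Definition nc_var (i : nat) : ncpoly k := fun w => if w == [:: i] then 1 else 0.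
(* f^n for n >= 1 : f * f * ... * f (n factors) *)
Definition nc_pow (f : ncpoly k) (n : nat) : ncpoly k := iter n.-1 (nc_mul f) f.

Definition is_endo (phi : ncpoly k -> ncpoly k) : Prop :=
  [/\ forall f, is_ncp f -> is_ncp (phi f),
      forall f g, is_ncp f -> is_ncp g -> phi (nc_add f g) = nc_add (phi f) (phi g),
      forall c f, is_ncp f -> phi (nc_scale c f) = nc_scale c (phi f)
    & forall f g, is_ncp f -> is_ncp g -> phi (nc_mul f g) = nc_mul (phi f) (phi g)].

Definition is_Tspace (V : ncpoly k -> Prop) : Prop :=
  [/\ forall f, V f -> is_ncp f,
      V nc_zero,
      forall f g, V f -> V g -> V (nc_add f g),
      forall c f, V f -> V (nc_scale c f)
    & forall phi f, is_endo phi -> V f -> V (phi f)].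

Definition Tspace_gen (f : ncpoly k) : ncpoly k -> Prop :=
  fun g => forall V, is_Tspace V -> V f -> V g.

End NC.

From HB Require Import structures.
From mathcomp Require Import all_boot all_order all_algebra.
From mathcomp Require Import boolp.
From Stdlib Require Import ClassicalEpsilon.
From mathcomp Require Import ring.
Set Implicit Arguments. Unset Strict Implicit. Unset Printing Implicit Defensive.
Import GRing.Theory.
Local Open Scope ring_scope.

(* Every element of {x_1^p}^S is a linear combination of p-th powers f^p, because
   these combinations already form a T-space; so it suffices to show that
   [f^p, v] lies in every T-space V containing x_1^p. Substituting g + m f for x_1,
   where g = [f, v] and m is an integer, puts (g + m f)^p in V. The (p-1)-st finite
   difference in m of (g + m f)^p kills every part of degree < p - 1 in f, leaving
   (p-1)! [f^p, v] plus a multiple of f^p, and (p-1)! = -1 in characteristic p by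
   Wilson's theorem. *)

Section NCAlgebra.
Variable k : fieldType.
Implicit Types f g h : ncpoly k.

Lemma nc_mulE f g w :
  nc_mul f g w = \sum_(0 <= i < (size w).+1) f (take i w) * g (drop i w).
Proof. by rewrite big_mkord. Qed.

Lemma nc_mulA : associative (@nc_mul k).
Proof.
move=> f g h; apply/funext => w; symmetry; rewrite !nc_mulE.
set n := size w.
pose T j i := f (take j w) * g (take (i - j) (drop j w)) * h (drop i w).
transitivity (\sum_(0 <= i < n.+1) \sum_(0 <= j < n.+1)
                 (if (j <= i)%N then T j i else 0)).
  rewrite [LHS]big_nat_cond [RHS]big_nat_cond.
  apply: eq_bigr => i /andP[/andP[_ lt_i_n] _].
  have size_take_i : size (take i w) = i by rewrite size_takel.
  rewrite nc_mulE size_take_i big_distrl /= [RHS](big_cat_nat (n := i.+1)) //=.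
  rewrite [X in _ = _ + X]big1_seq ?addr0; last first.
    by move=> j /andP[_]; rewrite mem_index_iota => /andP[lt_i_j _]; rewrite leqNgt lt_i_j.
  rewrite big_nat_cond [RHS]big_nat_cond.
  apply: eq_bigr => j /andP[/andP[_]]; rewrite ltnS => le_j_i _.
  by rewrite le_j_i /T take_takel // take_drop subnK // mulrA.
rewrite exchange_big_nat big_nat_cond [RHS]big_nat_cond.
apply: eq_bigr => j /andP[/andP[_ lt_j_n] _].
rewrite (big_cat_nat (n := j)) //=; last exact: ltnW.
rewrite [X in X + _]big1_seq ?add0r; last first.
  by move=> i /andP[_]; rewrite mem_index_iota => /andP[_ lt_i_j]; rewrite leqNgt lt_i_j.
rewrite nc_mulE big_distrr /= size_drop -{1}(add0n j) big_addn subSn //.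
by apply: eq_bigr => i _; rewrite leq_addl /T addnK drop_drop mulrA.
Qed.

Definition nc_one : ncpoly k := fun w => (w == [::])%:R.
Definition nc_opp f : ncpoly k := fun w => - f w.

Lemma nc_addA : associative (@nc_add k).
Proof. by move=> f g h; apply/funext => w; apply: addrA. Qed.

Lemma nc_addC : commutative (@nc_add k).
Proof. by move=> f g; apply/funext => w; apply: addrC. Qed.

Lemma nc_add0 : left_id (@nc_zero k) (@nc_add k).
Proof. by move=> f; apply/funext => w; apply: add0r. Qed.

Lemma nc_addN : left_inverse (@nc_zero k) nc_opp (@nc_add k).
Proof. by move=> f; apply/funext => w; apply: addNr. Qed.

Lemma nc_mul1 : left_id nc_one (@nc_mul k).
Proof.
move=> f; apply/funext => w; rewrite /nc_mul big_ord_recl /= take0 drop0 mul1r.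
by rewrite big1 ?addr0 // => i _; case: w i => [[]//|a w i]; rewrite mul0r.
Qed.

Lemma nc_mulr1 : right_id nc_one (@nc_mul k).
Proof.
move=> f; apply/funext => w; rewrite /nc_mul big_ord_recr /= take_size drop_size.
rewrite mulr1 big1 ?add0r // => i _.
have : (0 < size (drop i w))%N by rewrite size_drop subn_gt0.
by case: (drop i w) => // a l _; rewrite mulr0.
Qed.

Lemma nc_mulDl : left_distributive (@nc_mul k) (@nc_add k).
Proof.
move=> f g h; apply/funext => w; rewrite /nc_mul /nc_add -big_split.
by apply: eq_bigr => i _; rewrite mulrDl.
Qed.

Lemma nc_mulDr : right_distributive (@nc_mul k) (@nc_add k).
Proof.
move=> f g h; apply/funext => w; rewrite /nc_mul /nc_add -big_split.
by apply: eq_bigr => i _; rewrite mulrDr.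
Qed.

Lemma nc_one_neq0 : nc_one != nc_zero k.
Proof. by apply/eqP => /(congr1 (fun F => F [::]))/eqP; rewrite oner_eq0. Qed.

Lemma nc_scaleA a b f : nc_scale a (nc_scale b f) = nc_scale (a * b) f.
Proof. by apply/funext => w; apply: mulrA. Qed.

Lemma nc_scale1 : left_id 1 (@nc_scale k).
Proof. by move=> f; apply/funext => w; apply: mul1r. Qed.

Lemma nc_scaleDr : right_distributive (@nc_scale k) (@nc_add k).
Proof. by move=> a f g; apply/funext => w; apply: mulrDr. Qed.

Lemma nc_scaleDl f a b : nc_scale (a + b) f = nc_add (nc_scale a f) (nc_scale b f).
Proof. by apply/funext => w; apply: mulrDl. Qed.

Lemma nc_scaleAl a f g : nc_scale a (nc_mul f g) = nc_mul (nc_scale a f) g.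
Proof.
apply/funext => w; rewrite /nc_scale /nc_mul mulr_sumr.
by apply: eq_bigr => i _; rewrite mulrA.
Qed.

Lemma nc_scaleAr a f g : nc_scale a (nc_mul f g) = nc_mul f (nc_scale a g).
Proof.
apply/funext => w; rewrite /nc_scale /nc_mul mulr_sumr.
by apply: eq_bigr => i _; rewrite mulrCA.
Qed.

End NCAlgebra.

HB.instance Definition _ (k : fieldType) := Choice.copy (ncpoly k) (seq nat -> k).
HB.instance Definition _ (k : fieldType) := GRing.isNzRing.Build (ncpoly k)
  (@nc_addA k) (@nc_addC k) (@nc_add0 k) (@nc_addN k) (@nc_mulA k)
  (@nc_mul1 k) (@nc_mulr1 k) (@nc_mulDl k) (@nc_mulDr k) (@nc_one_neq0 k).
HB.instance Definition _ (k : fieldType) := GRing.Zmodule_isLmodule.Build k (ncpoly k)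
  (@nc_scaleA k) (@nc_scale1 k) (@nc_scaleDr k) (@nc_scaleDl k).
HB.instance Definition _ (k : fieldType) :=
  GRing.Lmodule_isLalgebra.Build k (ncpoly k) (@nc_scaleAl k).
HB.instance Definition _ (k : fieldType) :=
  GRing.Lalgebra_isAlgebra.Build k (ncpoly k) (@nc_scaleAr k).

Section Support.
Variable k : fieldType.
Implicit Types f g : ncpoly k.

Lemma ncpoly_addE f g w : (f + g) w = f w + g w. Proof. by []. Qed.
Lemma ncpoly_scaleE c f w : (c *: f) w = c * f w. Proof. by []. Qed.
Lemma ncpoly_mulE f g w :
  (f * g) w = \sum_(i < (size w).+1) f (take i w) * g (drop i w).
Proof. by []. Qed.

Lemma ncp0 : is_ncp (0 : ncpoly k).
Proof. by split => //; exists [::] => w /eqP[]. Qed.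

Lemma ncpD f g : is_ncp f -> is_ncp g -> is_ncp (f + g).
Proof.
move=> [f0 [s suppf]] [g0 [t suppg]]; split; first by rewrite ncpoly_addE f0 g0 addr0.
exists (s ++ t) => w; rewrite mem_cat ncpoly_addE.
have [fw0 | /suppf -> //] := eqVneq (f w) 0.
by rewrite fw0 add0r => /suppg ->; rewrite orbT.
Qed.

Lemma ncpZ c f : is_ncp f -> is_ncp (c *: f).
Proof.
move=> [f0 [s suppf]]; split; first by rewrite ncpoly_scaleE f0 mulr0.
exists s => w; rewrite ncpoly_scaleE => nz_cfw; apply: suppf.
by apply: contraNneq nz_cfw => ->; rewrite mulr0.
Qed.

Lemma ncpB f g : is_ncp f -> is_ncp g -> is_ncp (f - g).
Proof. by move=> ncp_f ncp_g; rewrite -scaleN1r; apply/ncpD/ncpZ. Qed.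

Lemma ncpMn f m : is_ncp f -> is_ncp (f *+ m).
Proof. by move=> ncp_f; elim: m => [|m IHm]; [exact: ncp0 | rewrite mulrS; apply: ncpD]. Qed.

Lemma ncp_sum (I : Type) (r : seq I) (F : I -> ncpoly k) :
  (forall i, is_ncp (F i)) -> is_ncp (\sum_(i <- r) F i).
Proof. by move=> ncpF; elim/big_ind: _ => //; [exact: ncp0 | exact: ncpD]. Qed.

Lemma ncpM f g : is_ncp f -> is_ncp g -> is_ncp (f * g).
Proof.
move=> [f0 [s suppf]] [g0 [t suppg]]; split.
  by rewrite ncpoly_mulE big_ord_recl big_ord0 addr0 /= f0 mul0r.
exists [seq x ++ y | x <- s, y <- t] => w; rewrite ncpoly_mulE => nz_fgw.
have [i _ nz_i] : exists2 i : 'I_(size w).+1, true & f (take i w) * g (drop i w) != 0.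
  apply/exists_inP; apply: contraNT nz_fgw => /exists_inPn zero_terms; apply/eqP.
  by apply: big1 => i _; apply/eqP/negbNE/zero_terms.
rewrite -(cat_take_drop i w); apply: allpairs_f.
  by apply: suppf; apply: contraNneq nz_i => ->; rewrite mul0r.
by apply: suppg; apply: contraNneq nz_i => ->; rewrite mulr0.
Qed.

Lemma ncpX f n : (0 < n)%N -> is_ncp f -> is_ncp (f ^+ n).
Proof.
case: n => // n _ ncp_f; elim: n => [|n IHn]; rewrite ?expr1 // exprS.
exact: ncpM.
Qed.

Lemma ncp_var i : is_ncp (nc_var k i).
Proof.
split => //; exists [:: [:: i]] => w; rewrite /nc_var.
by case: (w =P [:: i]) => [->|_]; rewrite ?inE ?eqxx.
Qed.

Lemma nc_powE f n : (0 < n)%N -> nc_pow f n = f ^+ n.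
Proof. by case: n => // n _; elim: n => [|n IHn]; rewrite ?expr1 // exprS -IHn. Qed.

End Support.

Section SubstX0.
Variable k : fieldType.
Implicit Types f g h : ncpoly k.

(* The x_1-part of [f], as a univariate polynomial; [epsilon] only picks a
   degree bound, which exists when [f] has finite support. *)
Definition x0_size f : nat :=
  epsilon (inhabits 0%N) (fun N => forall n, (N <= n)%N -> f (nseq n 0%N) = 0).

Definition x0_poly f : {poly k} := \poly_(n < x0_size f) f (nseq n 0%N).

(* The endomorphism x_1 |-> h, x_i |-> 0 for i > 1. *)
Definition subst_x0 h f : ncpoly k := horner_alg h (x0_poly f).

Lemma coef_x0_poly f n : is_ncp f -> (x0_poly f)`_n = f (nseq n 0%N).
Proof.
move=> [_ [s suppf]]; rewrite coef_poly; case: ltnP => // le_size_n.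
have bounded : exists N, forall n, (N <= n)%N -> f (nseq n 0%N) = 0.
  exists (\max_(w <- s) size w).+1 => m lt_max_m; apply/eqP.
  apply: contraTT lt_max_m => /suppf s_w; rewrite -ltnNge ltnS.
  by have := @leq_bigmax_seq _ s predT size _ s_w isT; rewrite size_nseq.
by rewrite (epsilon_spec (inhabits 0%N) _ bounded n le_size_n).
Qed.

Lemma x0_polyD f g : is_ncp f -> is_ncp g -> x0_poly (f + g) = x0_poly f + x0_poly g.
Proof.
by move=> ncp_f ncp_g; apply/polyP => n; rewrite coefD !coef_x0_poly //; apply: ncpD.
Qed.

Lemma x0_polyZ c f : is_ncp f -> x0_poly (c *: f) = c *: x0_poly f.
Proof. by move=> ncp_f; apply/polyP => n; rewrite coefZ !coef_x0_poly //; apply: ncpZ. Qed.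

Lemma x0_polyM f g : is_ncp f -> is_ncp g -> x0_poly (f * g) = x0_poly f * x0_poly g.
Proof.
move=> ncp_f ncp_g; apply/polyP => n; rewrite coefM coef_x0_poly; last exact: ncpM.
rewrite ncpoly_mulE size_nseq; apply: eq_bigr => i _.
by rewrite !coef_x0_poly // take_nseq ?drop_nseq // -ltnS.
Qed.

Lemma x0_poly_var : x0_poly (nc_var k 0) = 'X.
Proof.
apply/polyP => n; rewrite coefX coef_x0_poly; last exact: ncp_var.
by rewrite /nc_var; case: n => [|[|n]].
Qed.

Lemma subst_x0_var h : subst_x0 h (nc_var k 0) = h.
Proof. by rewrite /subst_x0 x0_poly_var horner_algX. Qed.

Lemma subst_x0_endo h : is_ncp h -> is_endo (subst_x0 h).
Proof.
move=> ncp_h; split=> [f ncp_f | f g ncp_f ncp_g | c f ncp_f | f g ncp_f ncp_g].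
- rewrite /subst_x0 /horner_alg /horner_morph horner_coef.
  apply: ncp_sum => -[[|i] _] /=; rewrite coef_map /= mulr_algl.
    by rewrite coef_x0_poly //= ncp_f.1 scale0r; apply: ncp0.
  exact/ncpZ/ncpX.
- by rewrite /subst_x0 [nc_add f g]/(f + g) x0_polyD // rmorphD.
- by rewrite /subst_x0 [nc_scale c f]/(c *: f) x0_polyZ // linearZ /= mulr_algl.
- by rewrite /subst_x0 [nc_mul f g]/(f * g) x0_polyM // rmorphM.
Qed.

Lemma endo0 (phi : ncpoly k -> ncpoly k) : is_endo phi -> phi 0 = 0.
Proof.
move=> [_ phiD _ _]; have := phiD 0 0 (ncp0 k) (ncp0 k).
change (phi (0 + 0) = phi 0 + phi 0 -> phi 0 = 0).
by rewrite addr0 => /(congr1 (fun x => x - phi 0)); rewrite subrr addrK.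
Qed.

Lemma endoX (phi : ncpoly k -> ncpoly k) f n :
  (0 < n)%N -> is_endo phi -> is_ncp f -> phi (f ^+ n) = phi f ^+ n.
Proof.
case: n => // n _ [_ _ _ phiM] ncp_f; elim: n => [|n IHn]; first by rewrite !expr1.
by rewrite exprS [_ * _]/(nc_mul _ _) phiM ?IHn -?exprS //; apply: ncpX.
Qed.

End SubstX0.

Definition alt_binom (d m : nat) : int := (-1) ^+ (d - m) *+ 'C(d, m).

Definition fdiff_pow (d j a : nat) : int :=
  \sum_(m < d.+1) alt_binom d m * (m + a)%:R ^+ j.

Lemma fdiff_pow_small j d a : (j <= d)%N -> fdiff_pow d j a = (j == d)%:R * d`!%:R.
Proof.
elim: j d a => [|j IHj] d a le_j_d.
  have := exprDn (-1 : int) 1 d; rewrite addNr expr0n => binom_sum.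
  transitivity ((d == 0%N)%:R : int).
    by rewrite binom_sum; apply: eq_bigr => m _; rewrite !expr0 expr1n !mulr1.
  by case: d {le_j_d binom_sum} => [|d]; rewrite ?mulr1 ?mul0r.
case: d le_j_d => [//|d] lt_j_d.
have shift_split : fdiff_pow d.+1 j.+1 a =
    \sum_(m < d.+2) alt_binom d.+1 m * (m + a)%:R ^+ j * m%:R + a%:R * fdiff_pow d.+1 j a.
  rewrite mulr_sumr -big_split; apply: eq_bigr => m _ /=.
  by rewrite exprSr natrD; ring.
rewrite shift_split IHj ?(ltnW lt_j_d) // eqn_leq [(d.+1 <= j)%N]leqNgt lt_j_d.
rewrite andbF mul0r mulr0 addr0 big_ord_recl /= mulr0 add0r.
(* m * C(d+1, m) = (d+1) * C(d, m-1) turns the sum into (d+1) times a shifted difference. *)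
transitivity (d.+1%:R * fdiff_pow d j a.+1); last first.
  by rewrite IHj // eqSS factS natrM; ring.
rewrite mulr_sumr; apply: eq_bigr => m _ /=.
rewrite /bump /= add1n /alt_binom subSS addSnnS -!(mulr_natr ((-1) ^+ _)).
have bin_shift : ('C(d.+1, m.+1) * m.+1 = d.+1 * 'C(d, m))%N by rewrite mulnC -mul_bin_diag.
have := congr1 (fun x => x%:R : int) bin_shift; rewrite /= !natrM => bin_shiftZ.
transitivity ((-1) ^+ (d - m) * (m + a.+1)%:R ^+ j * ('C(d.+1, m.+1)%:R * m.+1%:R) : int).
  by ring.
by rewrite bin_shiftZ; ring.
Qed.

Section MixedProducts.
Variables (R : pzRingType) (f g : R).

(* The sum of the products of n factors from {f, g} with exactly j factors f,
   i.e. the coefficient of t ^ j in (g + t f) ^ n. *)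
Fixpoint mixed_prod n j : R :=
  if n is n'.+1 then
    mixed_prod n' j * g + (if j is j'.+1 then mixed_prod n' j' * f else 0)
  else (j == 0%N)%:R.

Lemma mixed_prod_eq0 n j : (n < j)%N -> mixed_prod n j = 0.
Proof.
elim: n j => [|n IHn] [|j] //= lt_n_j.
by rewrite !IHn ?(ltnW lt_n_j) // !mul0r addr0.
Qed.

Lemma mixed_prod_diag n : mixed_prod n n = f ^+ n.
Proof. by elim: n => [|n IHn] //=; rewrite mixed_prod_eq0 // mul0r add0r IHn exprSr. Qed.

Lemma exprD_mixed_prod m n : (g + f *+ m) ^+ n = \sum_(j < n.+1) mixed_prod n j *+ m ^ j.
Proof.
elim: n => [|n IHn]; first by rewrite expr0 big_ord_recl big_ord0 addr0.
rewrite exprSr IHn mulrDr !mulr_suml.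
rewrite [RHS](eq_bigr (fun j : 'I_n.+2 => mixed_prod n j * g *+ m ^ j +
    (if (j : nat) is j'.+1 then mixed_prod n j' * f else 0) *+ m ^ j)); last first.
  by move=> j _ /=; rewrite mulrnDl.
rewrite big_split /=; congr (_ + _).
  rewrite [RHS]big_ord_recr /= mixed_prod_eq0 // mul0r mul0rn addr0.
  by apply: eq_bigr => j _; rewrite mulrnAl.
rewrite [RHS]big_ord_recl /= mul0rn add0r.
by apply: eq_bigr => j _; rewrite mulrnAr mulrnAl -mulrnA /bump /= add1n expnSr.
Qed.

(* When g = [f, v] the subdiagonal term telescopes. *)
Lemma mixed_prod_commutator v n :
  g = f * v - v * f -> mixed_prod n.+1 n = f ^+ n.+1 * v - v * f ^+ n.+1.
Proof.
move=> def_g; elim: n => [|n IHn]; first by rewrite /= mul1r addr0 expr1.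
rewrite -[LHS]/(mixed_prod n.+1 n.+1 * g + mixed_prod n.+1 n * f).
rewrite mixed_prod_diag IHn def_g [f ^+ n.+2]exprSr.
by rewrite mulrBr mulrBl !mulrA addrA subrK.
Qed.

End MixedProducts.

Lemma sum_alt_binom_expr (R : pzRingType) (f g : R) d :
  \sum_(m < d.+1) (alt_binom d m)%:~R * (g + f *+ m) ^+ d.+1 =
  d`!%:R * mixed_prod f g d.+1 d + (fdiff_pow d d.+1 0)%:~R * f ^+ d.+1.
Proof.
rewrite (eq_bigr (fun m : 'I_d.+1 => \sum_(j < d.+2)
    (alt_binom d m * m%:R ^+ j)%:~R * mixed_prod f g d.+1 j)) => [|m _]; last first.
  rewrite exprD_mixed_prod mulr_sumr; apply: eq_bigr => j _.
  by rewrite intrM rmorphXn rmorph_nat -natrX -mulrA mulr_natl.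
rewrite exchange_big (eq_bigr (fun j : 'I_d.+2 =>
    (fdiff_pow d j 0)%:~R * mixed_prod f g d.+1 j)) => [|j _]; last first.
  by rewrite -mulr_suml -rmorph_sum; congr (_%:~R * _); apply: eq_bigr => m _; rewrite addn0.
rewrite big_ord_recr big_ord_recr big1 ?Monoid.mul1m => [|j _].
  by rewrite (fdiff_pow_small (j := d)) // eqxx mul1r rmorph_nat mixed_prod_diag.
by rewrite fdiff_pow_small ?(ltn_eqF (ltn_ord j)) ?mul0r ?rmorph0 ?mul0r //= ltnW.
Qed.

Lemma pchar_fact_pred (R : nzRingType) p : p \in [pchar R] -> (p.-1)`!%:R = -1 :> R.
Proof.
move=> charRp; have p_prime := pcharf_prime charRp.
by apply/eqP; rewrite -addr_eq0 natr1 -(dvdn_pcharf charRp) -Wilson ?prime_gt1.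
Qed.

Section Tspace.
Variables (k : fieldType) (V : ncpoly k -> Prop).
Hypothesis V_T : is_Tspace V.
Implicit Types f g h : ncpoly k.

Lemma Tspace0 : V 0.
Proof. by case: V_T. Qed.

Lemma TspaceD f g : V f -> V g -> V (f + g).
Proof. by case: V_T => _ _ VD _ _; apply: VD. Qed.

Lemma TspaceZ c f : V f -> V (c *: f).
Proof. by case: V_T => _ _ _ VZ _; apply: VZ. Qed.

Lemma TspaceB f g : V f -> V g -> V (f - g).
Proof. by move=> Vf Vg; rewrite -scaleN1r; apply/TspaceD/TspaceZ. Qed.

Lemma Tspace_mulrz (z : int) f : V f -> V (z%:~R * f).
Proof. by rewrite mulrzl -scaler_int; apply: TspaceZ. Qed.

Lemma Tspace_sum (I : Type) (r : seq I) (F : I -> ncpoly k) :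
  (forall i, V (F i)) -> V (\sum_(i <- r) F i).
Proof. by move=> VF; elim/big_ind: _ => //; [exact: Tspace0 | exact: TspaceD]. Qed.

Lemma Tspace_pow n h :
  (0 < n)%N -> V (nc_pow (nc_var k 0) n) -> is_ncp h -> V (h ^+ n).
Proof.
move=> n_gt0 Vxn ncp_h; case: V_T => _ _ _ _ /(_ _ _ (subst_x0_endo ncp_h) Vxn).
by rewrite nc_powE // endoX ?subst_x0_var //; [exact: subst_x0_endo | exact: ncp_var].
Qed.

Lemma Tspace_commutator_pow p f v : p \in [pchar k] -> V (nc_pow (nc_var k 0) p) ->
  is_ncp f -> is_ncp v -> V (f ^+ p * v - v * f ^+ p).
Proof.
move=> charkp Vxp ncp_f ncp_v.
have p_gt0 := prime_gt0 (pcharf_prime charkp).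
have fact_p : (p.-1)`!%:R = -1 :> ncpoly k by apply: pchar_fact_pred; rewrite pchar_lalg.
move: fact_p Vxp; rewrite -(prednK p_gt0); set d := p.-1 => fact_d Vxp.
set g := f * v - v * f.
have ncp_g : is_ncp g by apply: ncpB; apply: ncpM.
have := sum_alt_binom_expr f g d.
rewrite (mixed_prod_commutator (v := v)) // fact_d mulN1r => sum_eq.
have -> : f ^+ d.+1 * v - v * f ^+ d.+1 = (fdiff_pow d d.+1 0)%:~R * f ^+ d.+1
    - \sum_(m < d.+1) (alt_binom d m)%:~R * (g + f *+ m) ^+ d.+1.
  by rewrite sum_eq opprD opprK addrCA subrr addr0.
apply: TspaceB; first by apply/Tspace_mulrz/(Tspace_pow _ Vxp).
by apply: Tspace_sum => m; apply/Tspace_mulrz/(Tspace_pow _ Vxp)/ncpD/ncpMn.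
Qed.

End Tspace.

Section PowSpan.
Variables (k : fieldType) (n : nat).
Hypothesis n_gt0 : (0 < n)%N.

Inductive pow_span : ncpoly k -> Prop :=
| pow_span0 : pow_span 0
| pow_spanD c f g : is_ncp f -> pow_span g -> pow_span (c *: f ^+ n + g).

Lemma pow_span_ncp u : pow_span u -> is_ncp u.
Proof. by elim=> [|c f g ncp_f _ ncp_g]; [exact: ncp0 | apply/ncpD/ncp_g/ncpZ/ncpX]. Qed.

Lemma pow_span_add u w : pow_span u -> pow_span w -> pow_span (u + w).
Proof.
move=> span_u span_w; elim: span_u => [|c f g ncp_f _ IH]; first by rewrite add0r.
by rewrite -addrA; apply: pow_spanD.
Qed.

Lemma pow_span_scale c u : pow_span u -> pow_span (c *: u).
Proof.
elim=> [|c' f g ncp_f _ IH]; first by rewrite scaler0; apply: pow_span0.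
by rewrite scalerDr scalerA; apply: pow_spanD.
Qed.

Lemma pow_span_endo phi u : is_endo phi -> pow_span u -> pow_span (phi u).
Proof.
move=> phi_endo; have [phi_ncp phiD phiZ _] := phi_endo.
elim=> [|c f g ncp_f span_g IH]; first by rewrite endo0 //; apply: pow_span0.
have ncp_fn : is_ncp (f ^+ n) by apply: ncpX.
rewrite [_ + _]/(nc_add _ _) (phiD _ _ (ncpZ c ncp_fn) (pow_span_ncp span_g)).
by rewrite [_ *: _]/(nc_scale _ _) phiZ // endoX //; apply: pow_spanD IH; apply: phi_ncp.
Qed.

Lemma pow_span_Tspace : is_Tspace pow_span.
Proof.
split; [exact: pow_span_ncp | exact: pow_span0 | exact: pow_span_add
       | exact: pow_span_scale | exact: pow_span_endo].
Qed.

Lemma Tspace_gen_pow_span u : Tspace_gen (nc_pow (nc_var k 0) n) u -> pow_span u.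
Proof.
apply; first exact: pow_span_Tspace.
by rewrite nc_powE // -[_ ^+ n]addr0 -[_ ^+ n]scale1r; apply/pow_spanD/pow_span0/ncp_var.
Qed.

End PowSpan.

Lemma Tspace_commutator_pow_span (k : fieldType) p (V : ncpoly k -> Prop) u v :
  p \in [pchar k] -> is_Tspace V -> V (nc_pow (nc_var k 0) p) ->
  pow_span p u -> is_ncp v -> V (u * v - v * u).
Proof.
move=> charkp V_T Vxp span_u ncp_v; elim: span_u => [|c f g ncp_f _ IH].
  by rewrite mul0r mulr0 subr0; apply: Tspace0.
have -> : (c *: f ^+ p + g) * v - v * (c *: f ^+ p + g) =
          c *: (f ^+ p * v - v * f ^+ p) + (g * v - v * g).
  by rewrite mulrDl mulrDr -scalerAl -scalerAr scalerBr opprD addrACA.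
by apply: (TspaceD V_T) IH; apply: (TspaceZ V_T); apply: Tspace_commutator_pow.
Qed.

Theorem corollary4p3 (k : fieldType) (p : nat) (hp : p \in [pchar k])
    (u v : ncpoly k) :
  Tspace_gen (nc_pow (nc_var k 0) p) u -> is_ncp v ->
  Tspace_gen (nc_pow (nc_var k 0) p) (nc_sub (nc_mul u v) (nc_mul v u)).
Proof.
have p_gt0 := prime_gt0 (pcharf_prime hp).
move=> /(Tspace_gen_pow_span p_gt0) span_u ncp_v V V_T Vxp.
exact: (Tspace_commutator_pow_span hp V_T Vxp span_u ncp_v).
Qed.
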